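(* In the setting described in the context, for every edge $\mathfrak e\in\mathcal E$ and all $\bar{\vec p},\bar{\vec q},\bar{\vec v},\bar{\vec w}\in(\mathds P_p(\mathfrak e))^3$, \begin{align*} (\epsilon^{\vec u}_{\mathfrak e},\partial_x\bar{\vec p})_{\mathfrak e}&=(C_{\vec n}^{-1}(\vec n-\bar{\vec n}_{\mathfrak e}),\bar{\vec p})_{\mathfrak e}+(\vec i_{\mathfrak e}\times(\vec r-\bar{\vec r}_{\mathfrak e}),\bar{\vec p})_{\mathfrak e}+\langle\vec u-\bar{\vec u}_{\mathfrak n},\bar{\vec p}\,\nu_{\mathfrak e}\rangle_{\mathfrak e},\\ (\epsilon^{\vec r}_{\mathfrak e},\partial_x\bar{\vec q})_{\mathfrak e}&=(C_{\vec m}^{-1}(\vec m-\bar{\vec m}_{\mathfrak e}),\bar{\vec q})_{\mathfrak e}+\langle\vec r-\bar{\vec r}_{\mathfrak n},\bar{\vec q}\,\nu_{\mathfrak e}\rangle_{\mathfrak e},\\ (\partial_x\epsilon^{\vec n}_{\mathfrak e},\bar{\vec v})_{\mathfrak e}&=\langle\tau_{\mathfrak e}(\bar{\vec u}_{\mathfrak e}-\bar{\vec u}_{\mathfrak n})-\theta^{\vec n}_{\mathfrak e}\nu_{\mathfrak e},\bar{\vec v}\rangle_{\mathfrak e},\\ (\partial_x\epsilon^{\vec m}_{\mathfrak e},\bar{\vec w})_{\mathfrak e}&=\langle\tau_{\mathfrak e}(\bar{\vec r}_{\mathfrak e}-\bar{\vec r}_{\mathfrak n})-\theta^{\vec m}_{\mathfrak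 e}\nu_{\mathfrak e},\bar{\vec w}\rangle_{\mathfrak e}-(\vec i_{\mathfrak e}\times(\vec n-\bar{\vec n}_{\mathfrak e}),\bar{\vec w})_{\mathfrak e}. \end{align*} Furthermore, for every node $\mathfrak n\in\mathcal N\setminus\mathcal N_{\mathrm D}$ and all $\vec v_{\mathfrak n},\vec w_{\mathfrak n}\in\mathbb R^3$, \[ 0=[\![\epsilon^{\vec n}_{\mathfrak e}\nu_{\mathfrak e}+\tau_{\mathfrak e}\epsilon^{\vec u}_{\mathfrak e}-\tau_{\mathfrak e}(\vec u-\bar{\vec u}_{\mathfrak n})]\!]_{\mathfrak n}\cdot\vec v_{\mathfrak n}+[\![\epsilon^{\vec m}_{\mathfrak e}\nu_{\mathfrak e}+\tau_{\mathfrak e}\epsilon^{\vec r}_{\mathfrak e}-\tau_{\mathfrak e}(\vec r-\bar{\vec r}_{\mathfrak n})]\!]_{\mathfrak n}\cdot\vec w_{\mathfrak n}. \]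
   Context: Network: $\mathcal G=(\mathcal N,\mathcal E)$ finite connected graph embedded in $\mathbb R^3$; each edge $\mathfrak e$ is the straight segment between distinct nodes $\mathfrak n_k,\mathfrak n_\ell$ ($k<\ell$), with length $h_{\mathfrak e}$, direction $\vec i_{\mathfrak e}=(\mathfrak n_\ell-\mathfrak n_k)/h_{\mathfrak e}$, normals $\nu_{\mathfrak e}(\mathfrak n_k)=-1$, $\nu_{\mathfrak e}(\mathfrak n_\ell)=+1$; $x$ arclength on $\mathfrak e$ increasing along $\vec i_{\mathfrak e}$, $\partial_x$ its derivative, $\times$ cross product. $C_{\vec n},C_{\vec m}$ symmetric $\mathbb R^{3\times3}$-valued functions on edges with uniform bounds $\alpha|\xi|^2\le(C\xi)\cdot\xi\le\beta|\xi|^2$, $0<\alpha,\beta<\infty$. $(\vec a,\vec b)_{\mathfrak e}=\int_{\mathfrak e}\vec a\cdot\vec b\,\mathrm d\sigma$, $\langle\vec a,\vec b\rangle_{\mathfrak e}=\sum_{\mathfrak n\text{ endpoint of }\mathfrak e}\vec a(\mathfrak n)\cdot\vec b(\mathfrak n)$ (also for nodal quantities). For edge quantities, $[\![q_{\mathfrak e}]\!]_{\mathfrak n}=\sum_{\mathfrak e\text{ adjacent to }\mathfrak n}q_{\mathfrak e}(\mathfrak n)$. A nonempty set $\mathcal N_{\mathrm D}\subset\mathcal N$ of Dirichlet nodes is fixed. Data: $\vec f_{\mathfrak e},\vec g_{\mathfrak e}\in(L^2(\mathfrak e))^3$ per edge, $\vec f_{\mathfrak n},\vec g_{\mathfrak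 n}\in\mathbb R^3$ per free node, $\vec u^{\mathrm D}_{\mathfrak n},\vec r^{\mathrm D}_{\mathfrak n}\in\mathbb R^3$ per Dirichlet node. Exact solution: $\vec u_{\mathfrak e},\vec r_{\mathfrak e}\in(L^2(\mathfrak e))^3$, $\vec n_{\mathfrak e},\vec m_{\mathfrak e}\in(H^1(\mathfrak e))^3$ per edge and $\vec u_{\mathfrak n},\vec r_{\mathfrak n}\in\mathbb R^3$ per node (unique) with $\vec u_{\mathfrak n}=\vec u^{\mathrm D}_{\mathfrak n}$, $\vec r_{\mathfrak n}=\vec r^{\mathrm D}_{\mathfrak n}$ on $\mathcal N_{\mathrm D}$, $[\![\vec n_{\mathfrak e}\nu_{\mathfrak e}]\!]_{\mathfrak n}=\vec f_{\mathfrak n}$, $[\![\vec m_{\mathfrak e}\nu_{\mathfrak e}]\!]_{\mathfrak n}=\vec g_{\mathfrak n}$ on $\mathcal N\setminus\mathcal N_{\mathrm D}$, and on each edge, for all $\vec p,\vec q\in(H^1(\mathfrak e))^3$, $\vec v,\vec w\in(L^2(\mathfrak e))^3$: $-(C_{\vec n}^{-1}\vec n_{\mathfrak e},\vec p)_{\mathfrak e}+(\vec u_{\mathfrak e},\partial_x\vec p)_{\mathfrak e}-(\vec i_{\mathfrak e}\times\vec r_{\mathfrak e},\vec p)_{\mathfrak e}=\langle\vec u_{\mathfrak n},\vec p\nu_{\mathfrak e}\rangle_{\mathfrak e}$; $-(C_{\vec m}^{-1}\vec m_{\mathfrak e},\vec q)_{\mathfrak e}+(\vec r_{\mathfrak e},\partial_x\vec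 q)_{\mathfrak e}=\langle\vec r_{\mathfrak n},\vec q\nu_{\mathfrak e}\rangle_{\mathfrak e}$; $(\partial_x\vec n_{\mathfrak e},\vec v)_{\mathfrak e}=(\vec f_{\mathfrak e},\vec v)_{\mathfrak e}$; $(\vec i_{\mathfrak e}\times\vec n_{\mathfrak e},\vec w)_{\mathfrak e}+(\partial_x\vec m_{\mathfrak e},\vec w)_{\mathfrak e}=(\vec g_{\mathfrak e},\vec w)_{\mathfrak e}$. Then $\vec u_{\mathfrak e},\vec r_{\mathfrak e}\in(H^1(\mathfrak e))^3$ with $\vec u_{\mathfrak e}(\mathfrak n)=\vec u_{\mathfrak n}$, $\vec r_{\mathfrak e}(\mathfrak n)=\vec r_{\mathfrak n}$; subscripts are dropped, writing $\vec u,\vec r,\vec n,\vec m$. HDG solution: fix $p\in\mathbb N$, $\tau_{\mathfrak e}>0$ per edge, $V_p^{\mathfrak e}=(\mathds P_p(\mathfrak e))^3$. $\bar{\vec u}_{\mathfrak e},\bar{\vec r}_{\mathfrak e},\bar{\vec n}_{\mathfrak e},\bar{\vec m}_{\mathfrak e}\in V_p^{\mathfrak e}$ per edge and $\bar{\vec u}_{\mathfrak n},\bar{\vec r}_{\mathfrak n}\in\mathbb R^3$ per node with $\bar{\vec u}_{\mathfrak n}=\vec u^{\mathrm D}_{\mathfrak n}$, $\bar{\vec r}_{\mathfrak n}=\vec r^{\mathrm D}_{\mathfrak n}$ on $\mathcal N_{\mathrm D}$; $[\![\bar{\vec n}_{\mathfrak e}\nu_{\mathfrak e}+\tau_{\mathfrak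 e}(\bar{\vec u}_{\mathfrak e}-\bar{\vec u}_{\mathfrak n})]\!]_{\mathfrak n}=\vec f_{\mathfrak n}$ and $[\![\bar{\vec m}_{\mathfrak e}\nu_{\mathfrak e}+\tau_{\mathfrak e}(\bar{\vec r}_{\mathfrak e}-\bar{\vec r}_{\mathfrak n})]\!]_{\mathfrak n}=\vec g_{\mathfrak n}$ on $\mathcal N\setminus\mathcal N_{\mathrm D}$; and on each edge, for all $\bar{\vec p},\bar{\vec q},\bar{\vec v},\bar{\vec w}\in V_p^{\mathfrak e}$: $-(C_{\vec n}^{-1}\bar{\vec n}_{\mathfrak e},\bar{\vec p})_{\mathfrak e}+(\bar{\vec u}_{\mathfrak e},\partial_x\bar{\vec p})_{\mathfrak e}-(\vec i_{\mathfrak e}\times\bar{\vec r}_{\mathfrak e},\bar{\vec p})_{\mathfrak e}=\langle\bar{\vec u}_{\mathfrak n},\bar{\vec p}\nu_{\mathfrak e}\rangle_{\mathfrak e}$; $-(C_{\vec m}^{-1}\bar{\vec m}_{\mathfrak e},\bar{\vec q})_{\mathfrak e}+(\bar{\vec r}_{\mathfrak e},\partial_x\bar{\vec q})_{\mathfrak e}=\langle\bar{\vec r}_{\mathfrak n},\bar{\vec q}\nu_{\mathfrak e}\rangle_{\mathfrak e}$; $(\partial_x\bar{\vec n}_{\mathfrak e},\bar{\vec v})_{\mathfrak e}+\tau_{\mathfrak e}\langle\bar{\vec u}_{\mathfrak e},\bar{\vec v}\rangle_{\mathfrak e}=(\vec f_{\mathfrak e},\bar{\vec v})_{\mathfrak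 e}+\tau_{\mathfrak e}\langle\bar{\vec u}_{\mathfrak n},\bar{\vec v}\rangle_{\mathfrak e}$; $(\vec i_{\mathfrak e}\times\bar{\vec n}_{\mathfrak e},\bar{\vec w})_{\mathfrak e}+(\partial_x\bar{\vec m}_{\mathfrak e},\bar{\vec w})_{\mathfrak e}+\tau_{\mathfrak e}\langle\bar{\vec r}_{\mathfrak e},\bar{\vec w}\rangle_{\mathfrak e}=(\vec g_{\mathfrak e},\bar{\vec w})_{\mathfrak e}+\tau_{\mathfrak e}\langle\bar{\vec r}_{\mathfrak n},\bar{\vec w}\rangle_{\mathfrak e}$. Projection: for $\vec a,\vec b\in(H^1(\mathfrak e))^3$, $\Pi(\vec a,\vec b)=(\Pi_1(\vec a,\vec b),\Pi_2(\vec a,\vec b))\in V_p^{\mathfrak e}\times V_p^{\mathfrak e}$ is the (well-defined) pair with $(\Pi_1(\vec a,\vec b),\bar{\vec v})_{\mathfrak e}=(\vec a,\bar{\vec v})_{\mathfrak e}$ and $(\Pi_2(\vec a,\vec b),\bar{\vec v})_{\mathfrak e}=(\vec b,\bar{\vec v})_{\mathfrak e}$ for all $\bar{\vec v}\in(\mathds P_{p-1}(\mathfrak e))^3$, and $\Pi_2(\vec a,\vec b)(\mathfrak n)\nu_{\mathfrak e}(\mathfrak n)+\tau_{\mathfrak e}\Pi_1(\vec a,\vec b)(\mathfrak n)=\vec b(\mathfrak n)\nu_{\mathfrak e}(\mathfrak n)+\tau_{\mathfrak e}\vec a(\mathfrak n)$ at both endpoints $\mathfrak n$. Errors: $\theta^{\vec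 u}_{\mathfrak e}=\vec u_{\mathfrak e}-\Pi_1(\vec u_{\mathfrak e},\vec n_{\mathfrak e})$, $\epsilon^{\vec u}_{\mathfrak e}=\Pi_1(\vec u_{\mathfrak e},\vec n_{\mathfrak e})-\bar{\vec u}_{\mathfrak e}$, $\theta^{\vec n}_{\mathfrak e}=\vec n_{\mathfrak e}-\Pi_2(\vec u_{\mathfrak e},\vec n_{\mathfrak e})$, $\epsilon^{\vec n}_{\mathfrak e}=\Pi_2(\vec u_{\mathfrak e},\vec n_{\mathfrak e})-\bar{\vec n}_{\mathfrak e}$, and analogously $\theta^{\vec r}_{\mathfrak e}=\vec r_{\mathfrak e}-\Pi_1(\vec r_{\mathfrak e},\vec m_{\mathfrak e})$, $\epsilon^{\vec r}_{\mathfrak e}=\Pi_1(\vec r_{\mathfrak e},\vec m_{\mathfrak e})-\bar{\vec r}_{\mathfrak e}$, $\theta^{\vec m}_{\mathfrak e}=\vec m_{\mathfrak e}-\Pi_2(\vec r_{\mathfrak e},\vec m_{\mathfrak e})$, $\epsilon^{\vec m}_{\mathfrak e}=\Pi_2(\vec r_{\mathfrak e},\vec m_{\mathfrak e})-\bar{\vec m}_{\mathfrak e}$. *)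

From HB Require Import structures.
From mathcomp Require Import all_boot all_order all_algebra.
From mathcomp Require Import all_classical all_reals all_analysis.
Set Implicit Arguments. Unset Strict Implicit. Unset Printing Implicit Defensive.
Import Order.TTheory GRing.Theory Num.Theory.
Local Open Scope classical_set_scope.
Local Open Scope ring_scope.

Section HDGDefs.
Variable R : realType.

Definition vec := 'cV[R]_3.
(* vector-valued polynomials in the arclength x *)
Definition vpoly := 'cV[{poly R}]_3.

Definition dot (a b : vec) : R := \sum_(i < 3) a i ord0 * b i ord0.

Definition cross (a b : vec) : vec :=
  \col_(i < 3)
    (if (i == 0 :> nat) then a 1 ord0 * b 2 ord0 - a 2 ord0 * b 1 ord0
     else if (i == 1 :> nat) then a 2 ord0 * b 0 ord0 - a 0 ord0 * b 2 ord0
     else a 0 ord0 * b 1 ord0 - a 1 ord0 * b 0 ord0).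

Definition vnorm (a : vec) : R := Num.sqrt (dot a a).

(* polynomial of degree <= k-1, i.e. each component has size <= k;
   (P_p = polyle p.+1, P_{p-1} = polyle p, with P_{-1} = {0}) *)
Definition polyle (k : nat) (P : vpoly) : Prop := forall i, (size (P i ord0) <= k)%N.

Definition veval (P : vpoly) (x : R) : vec := \col_i (P i ord0).[x].
Definition vderiv (P : vpoly) : vpoly := map_mx (@deriv R) P.

(* edge = [0,h] in arclength *)
Definition L2 (h : R) (f : R -> vec) : Prop :=
  forall i : 'I_3,
    measurable_fun `[0, h] (fun x => f x i ord0) /\
    (@lebesgue_measure R).-integrable `[0, h] (fun x => ((f x i ord0) ^+ 2)%:E).

(* f in H^1(0,h) with weak derivative df: f is (the continuous representative of)
   an absolutely continuous function whose derivative df is in L^2 *)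
Definition H1 (h : R) (f df : R -> vec) : Prop :=
  L2 h f /\ L2 h df /\
  forall x, 0 <= x <= h ->
    f x = f 0 + \col_(i < 3) Rintegral (@lebesgue_measure R) `[0, x] (fun t => df t i ord0).

Definition ip (h : R) (a b : R -> vec) : R :=
  Rintegral (@lebesgue_measure R) `[0, h] (fun x => dot (a x) (b x)).

(* endpoints of an edge: false = start node n_k (x = 0), true = end node n_l (x = h) *)
Definition xpt (h : R) (b : bool) : R := if b then h else 0.
Definition nu (b : bool) : R := if b then 1 else -1.

Definition bpair (A B : bool -> vec) : R := dot (A false) (B false) + dot (A true) (B true).

Section Graph.
Variables (N E : finType) (src tgt : E -> N).

Definition endnode (e : E) (b : bool) : N := if b then tgt e else src e.

Definition jump (n : N) (F : E -> bool -> vec) : vec :=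
  \sum_(e | src e == n) F e false + \sum_(e | tgt e == n) F e true.

Definition adjrel : rel N :=
  fun a b => [exists e, ((src e == a) && (tgt e == b)) || ((src e == b) && (tgt e == a))].

Definition graph_connected : Prop := forall a b : N, connect adjrel a b.
Variable pos : N -> vec.
Definition elen (e : E) : R := vnorm (pos (tgt e) - pos (src e)).
Definition edir (e : E) : vec := (elen e)^-1 *: (pos (tgt e) - pos (src e)).
End Graph.

Definition is_proj (p : nat) (tau h : R) (a b : R -> vec) (P1 P2 : vpoly) : Prop :=
  polyle p.+1 P1 /\ polyle p.+1 P2 /\
  (forall V, polyle p V ->
      ip h (veval P1) (veval V) = ip h a (veval V) /\
      ip h (veval P2) (veval V) = ip h b (veval V)) /\
  (forall s : bool, nu s *: veval P2 (xpt h s) + tau *: veval P1 (xpt h s)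
                    = nu s *: b (xpt h s) + tau *: a (xpt h s)).

End HDGDefs.
Arguments nu {R} b.

(* Each edge identity is the difference of the exact and the discrete equation tested with
   the same polynomial. In the first two, the projection property turns (Pi_1 u, p') into
   (u, p'), since p' has degree p - 1. In the last two, (d_x Pi_2 n, v) is integrated by parts
   twice, once against the polynomial Pi_2 n and once against the H^1 field n, so that
   orthogonality cancels the interior terms and only the trace mismatch Pi_2 n - n survives;
   integration by parts of an absolutely continuous n against a polynomial comes from Fubini
   on the triangle 0 <= t <= x <= h. The nodal identity is the endpoint condition of the
   projection, nu Pi_2 + tau Pi_1 = nu n + tau u, summed over the edges at the node, after
   which the exact and discrete transmission conditions cancel. Coercivity bounds the inverse
   compliance tensors by 1/alpha, so every integral involved is finite. *)

From HB Require Import structures.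
From mathcomp Require Import all_boot all_order all_algebra.
From mathcomp Require Import all_classical all_reals all_analysis.
From mathcomp Require Import measurable_realfun.
From mathcomp Require Import lra ring.
Set Implicit Arguments. Unset Strict Implicit. Unset Printing Implicit Defensive.
Import Order.TTheory GRing.Theory Num.Theory.
Import numFieldNormedType.Exports.
Local Open Scope classical_set_scope.
Local Open Scope ring_scope.

Section IntervalIntegrability.
Variable R : realType.
Local Notation mu := (@lebesgue_measure R).
Implicit Types (h k : R) (f g : R -> R).

Definition integrable_on h f := mu.-integrable `[0, h] (EFin \o f).

Definition bounded_measurable h f :=
  measurable_fun `[0, h] f /\ exists M : R, forall x : R, 0 <= x <= h -> `|f x| <= M.

Lemma bounded_on_itv h f (M : R) : (forall x, 0 <= x <= h -> `|f x| <= M) ->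
  [bounded f x | x in `[0, h]].
Proof.
move=> fM; exists M; split; first exact: num_real.
by move=> y My x /=; rewrite in_itv /= => /fM/le_trans; apply; apply: ltW.
Qed.

Lemma bounded_measurable_integrable h f :
  bounded_measurable h f -> integrable_on h f.
Proof.
move=> [mf [M fM]].
have mu_lty : (mu (`[0%R, h] : set R) < +oo)%E.
  by rewrite lebesgue_measure_itv; case: ifP => _ //; rewrite -EFinD ltry.
exact: measurable_bounded_integrable mu_lty mf (bounded_on_itv fM).
Qed.

Lemma integrable_onMl h f g :
  bounded_measurable h f -> integrable_on h g -> integrable_on h (fun x => f x * g x).
Proof.
move=> [mf [M fM]] g_int; rewrite /integrable_on.
have -> : EFin \o (fun x => f x * g x) = ((EFin \o f) \* (EFin \o g))%E.
  by apply/funext => x /=; rewrite EFinM.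
exact: (@integrableMr _ _ _ mu _ (measurable_itv _) _ _ mf (bounded_on_itv fM) g_int).
Qed.

Lemma integrable_onMr h f g :
  integrable_on h f -> bounded_measurable h g -> integrable_on h (fun x => f x * g x).
Proof. by move=> f_int g_bnd; under eq_fun do rewrite mulrC; exact: integrable_onMl. Qed.

Lemma integrable_onD h f g :
  integrable_on h f -> integrable_on h g -> integrable_on h (fun x => f x + g x).
Proof.
move=> f_int g_int; rewrite /integrable_on.
have -> : EFin \o (fun x => f x + g x) = ((EFin \o f) \+ (EFin \o g))%E.
  by apply/funext => x /=; rewrite EFinD.
exact: integrableD.
Qed.

Lemma integrable_onB h f g :
  integrable_on h f -> integrable_on h g -> integrable_on h (fun x => f x - g x).
Proof.
move=> f_int g_int; rewrite /integrable_on.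
have -> : EFin \o (fun x => f x - g x) = ((EFin \o f) \- (EFin \o g))%E.
  by apply/funext => x /=; rewrite EFinB.
exact: integrableB.
Qed.

Lemma integrable_onZ h k f : integrable_on h f -> integrable_on h (fun x => k * f x).
Proof.
move=> f_int; rewrite /integrable_on.
have -> : EFin \o (fun x => k * f x) = (fun x => k%:E * (EFin \o f) x)%E.
  by apply/funext => x /=; rewrite EFinM.
exact: integrableZl.
Qed.

Lemma integrable_on_sum h (I : Type) (s : seq I) (F : I -> R -> R) :
  (forall i, integrable_on h (F i)) -> integrable_on h (fun x => \sum_(i <- s) F i x).
Proof.
move=> F_int; rewrite /integrable_on.
have -> : EFin \o (fun x => \sum_(i <- s) F i x)
          = (fun x => \sum_(i <- s) (EFin \o F i) x)%E.
  by apply/funext => x /=; rewrite -sumEFin.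
by apply: (@integrable_sum _ _ _ mu _ (measurable_itv _)) => i _; exact: F_int.
Qed.

Lemma integrable_on_measurable h f : integrable_on h f -> measurable_fun `[0, h] f.
Proof. by move=> /measurable_int /measurable_EFinP. Qed.

Lemma continuous_bounded_measurable h f : continuous f -> bounded_measurable h f.
Proof.
move=> cf; split; first by apply: measurable_funTS; exact: continuous_measurable_fun.
have /compact_bounded[M [_ fM]] :=
  continuous_compact (continuous_subspaceT cf) (@segment_compact R 0 h).
exists (`|M| + 1) => x x0h; apply: fM; last by exists x => //; rewrite /= in_itv.
by rewrite (le_lt_trans (ler_norm M)) // ltrDl.
Qed.

Lemma horner_bounded_measurable h (q : {poly R}) : bounded_measurable h (horner q).
Proof. exact/continuous_bounded_measurable/continuous_horner. Qed.

Lemma sqr_integrable_integrable h f : measurable_fun `[0, h] f ->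
  integrable_on h (fun x => f x ^+ 2) -> integrable_on h f.
Proof.
move=> mf f2_int.
have f2_int1 : integrable_on h (fun x => 1 + f x ^+ 2).
  apply: integrable_onD f2_int; apply: bounded_measurable_integrable.
  exact/continuous_bounded_measurable/cst_continuous.
apply: le_integrable f2_int1 => //; first exact/measurable_EFinP.
move=> x _; rewrite /= lee_fin [leRHS]ger0_norm ?addr_ge0 ?sqr_ge0 //.
by rewrite -[f x ^+ 2](real_normK (num_real (f x))); have := normr_ge0 (f x); nra.
Qed.

End IntervalIntegrability.

Section VectorFields.
Variable R : realType.
Local Notation mu := (@lebesgue_measure R).
Implicit Types (h : R) (a b c : R -> vec R).

Definition vintegrable h a := forall i, integrable_on h (fun x => a x i ord0).
Definition vbounded h a := forall i, bounded_measurable h (fun x => a x i ord0).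

Lemma vbounded_vintegrable h a : vbounded h a -> vintegrable h a.
Proof. by move=> a_bnd i; apply: bounded_measurable_integrable. Qed.

Lemma L2_vintegrable h a : L2 h a -> vintegrable h a.
Proof. by move=> a_L2 i; have [ma a2_int] := a_L2 i; exact: sqr_integrable_integrable. Qed.

Lemma vintegrable_cross h (d : vec R) a :
  vintegrable h a -> vintegrable h (fun x => cross d (a x)).
Proof.
move=> a_int i; under eq_fun do rewrite mxE.
by case: (i == 0 :> nat); [|case: (i == 1 :> nat)]; apply: integrable_onB; apply: integrable_onZ.
Qed.

Lemma vintegrable_mulmx h (M : R -> 'M[R]_3) a :
  (forall i j, bounded_measurable h (fun x => M x i j)) -> vintegrable h a ->
  vintegrable h (fun x => M x *m a x).
Proof.
move=> M_bnd a_int i; under eq_fun do rewrite mxE.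
by apply: integrable_on_sum => j; apply: integrable_onMl.
Qed.

Lemma integrable_on_dot h a b :
  vintegrable h a -> vbounded h b -> integrable_on h (fun x => dot (a x) (b x)).
Proof. by move=> a_int b_bnd; apply: integrable_on_sum => i; apply: integrable_onMr. Qed.

Lemma dotBl (a b c : vec R) : dot (a - b) c = dot a c - dot b c.
Proof. by rewrite /dot -sumrB; apply: eq_bigr => i _; rewrite !mxE mulrBl. Qed.

Lemma dot0l (c : vec R) : dot 0 c = 0.
Proof. by rewrite /dot big1 // => i _; rewrite mxE mul0r. Qed.

Lemma crossBr (d a b : vec R) : cross d (a - b) = cross d a - cross d b.
Proof.
by apply/matrixP => i j; rewrite !mxE; case: ifP => _; [|case: ifP => _]; rewrite ?mxE; ring.
Qed.

Lemma ipBl h a b c : vintegrable h a -> vintegrable h b -> vbounded h c ->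
  ip h (fun x => a x - b x) c = ip h a c - ip h b c.
Proof.
move=> a_int b_int c_bnd; rewrite /ip -(@RintegralB _ _ _ mu) //.
- by apply: eq_Rintegral => x _; rewrite dotBl.
- exact: integrable_on_dot.
- exact: integrable_on_dot.
Qed.

Lemma Rintegral_on_sum h (I : Type) (s : seq I) (F : I -> R -> R) :
  (forall i, integrable_on h (F i)) ->
  \int[mu]_(x in `[0, h]) (\sum_(i <- s) F i x) = \sum_(i <- s) \int[mu]_(x in `[0, h]) F i x.
Proof.
move=> F_int; elim: s => [|i s IHs].
  under eq_Rintegral do rewrite big_nil.
  by rewrite big_nil Rintegral_cst ?mul0r //; exact: measurable_itv.
under eq_Rintegral do rewrite big_cons.
rewrite big_cons -IHs (@RintegralD _ _ _ mu) //; first exact: F_int.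
exact: (integrable_on_sum s F_int).
Qed.

Lemma ip_componentwise h a b :
  (forall i, integrable_on h (fun x => a x i ord0 * b x i ord0)) ->
  ip h a b = \sum_(i < 3) \int[mu]_(x in `[0, h]) (a x i ord0 * b x i ord0).
Proof. by move=> ab_int; rewrite /ip /dot Rintegral_on_sum. Qed.

End VectorFields.

Section PolynomialFields.
Variable R : realType.
Local Notation mu := (@lebesgue_measure R).
Implicit Types (h : R) (P Q : vpoly R).

Lemma veval_vbounded h P : vbounded h (veval P).
Proof.
move=> i; rewrite (_ : (fun x => _) = horner (P i ord0)).
  exact: horner_bounded_measurable.
by apply/funext => x; rewrite mxE.
Qed.

Lemma veval_vintegrable h P : vintegrable h (veval P).
Proof. exact/vbounded_vintegrable/veval_vbounded. Qed.

Lemma veval_L2 h P : L2 h (veval P).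
Proof.
move=> i; have [mP _] := veval_vbounded h P i; split => //.
apply: bounded_measurable_integrable.
rewrite (_ : (fun x => _) = horner (P i ord0 ^+ 2)).
  exact: horner_bounded_measurable.
by apply/funext => x; rewrite mxE horner_exp.
Qed.

Lemma Rintegral_deriv_poly (q : {poly R}) (a b : R) : a <= b ->
  \int[mu]_(x in `[a, b]) (q^`()).[x] = q.[b] - q.[a].
Proof.
rewrite le_eqVlt => /orP[/eqP <-|ab]; first by rewrite set_itv1 Rintegral_set1 subrr.
rewrite /Rintegral (@continuous_FTC2 R (horner q^`()) (horner q) a b ab) //.
- exact/continuous_subspaceT/continuous_horner.
- split; first by move=> x _; exact: derivable_horner.
  + exact/cvg_at_right_filter/continuous_horner.
  + exact/cvg_at_left_filter/continuous_horner.
- by move=> x _; rewrite -derivE.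
Qed.

Lemma veval_H1 h P : H1 h (veval P) (veval (vderiv P)).
Proof.
split; first exact: veval_L2.
split; first exact: veval_L2.
move=> x /andP[x0 _]; apply/matrixP => i j; rewrite !mxE.
under eq_Rintegral do rewrite !mxE.
by rewrite Rintegral_deriv_poly // addrC subrK.
Qed.

Lemma vevalB P Q : veval (P - Q) = (fun x => veval P x - veval Q x).
Proof. by apply/funext => x; apply/matrixP => i j; rewrite !mxE hornerD hornerN. Qed.

Lemma vderivB P Q : vderiv (P - Q) = vderiv P - vderiv Q.
Proof. by apply/matrixP => i j; rewrite !mxE derivB. Qed.

Lemma polyle_vderiv p P : polyle p.+1 P -> polyle p (vderiv P).
Proof.
move=> sP i; rewrite mxE; have [->|nzP] := eqVneq (P i ord0) 0.
  by rewrite deriv0 size_poly0.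
by rewrite -ltnS (leq_trans (lt_size_deriv nzP)).
Qed.

End PolynomialFields.

Section CoerciveMatrix.
Variables (R : realType) (alpha : R) (C : 'M[R]_3).
Hypotheses (alpha_gt0 : 0 < alpha) (C_sym : C^T = C)
  (C_coercive : forall xi : vec R, alpha * dot xi xi <= dot (C *m xi) xi).

Lemma sqr_le_dot_self (y : vec R) k : y k ord0 ^+ 2 <= dot y y.
Proof.
rewrite /dot (bigD1 k) //= expr2 lerDl.
by apply: sumr_ge0 => i _; rewrite -expr2 sqr_ge0.
Qed.

Lemma dot_delta_mxl (j : 'I_3) (y : vec R) : dot (delta_mx j 0) y = y j ord0.
Proof.
rewrite /dot (bigD1 j) //= big1 ?addr0; first by rewrite mxE eqxx mul1r.
by move=> i /negbTE ij; rewrite mxE ij mul0r.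
Qed.

Lemma coercive_unitmx : C \in unitmx.
Proof.
rewrite unitmxE unitfE; apply/negP => /det0P[v v_neq0 vC].
have Cv : C *m v^T = 0 by rewrite -[C]C_sym -trmx_mul vC trmx0.
have vv0 : dot v^T v^T = 0.
  apply/eqP; rewrite eq_le -(pmulr_rle0 _ alpha_gt0).
  have := C_coercive v^T; rewrite Cv dot0l => -> /=.
  by apply: sumr_ge0 => i _; rewrite -expr2 sqr_ge0.
move/eqP: v_neq0; apply; apply/matrixP => i j; rewrite [i]ord1 mxE.
apply/eqP; rewrite -sqrf_eq0 eq_le sqr_ge0 andbT -vv0.
by have := sqr_le_dot_self v^T j; rewrite mxE.
Qed.

(* With y = C^-1 e_j, coercivity gives alpha |y|^2 <= y_j <= |y|,
   hence |y_i| <= |y| <= 1/alpha. *)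
Lemma coercive_invmx_bound i j : `|invmx C i j| <= alpha^-1.
Proof.
pose y : vec R := invmx C *m delta_mx j 0.
have -> : invmx C i j = y i ord0 by rewrite /y -colE mxE.
have yj_ge : alpha * dot y y <= y j ord0.
  by have := C_coercive y; rewrite mulmxA mulmxV ?coercive_unitmx // mul1mx dot_delta_mxl.
have yj2_le := sqr_le_dot_self y j; have yi2_le := sqr_le_dot_self y i.
have yy_ge0 : 0 <= dot y y by apply: le_trans (sqr_ge0 _) yi2_le.
have yy_sqr_le : (alpha * dot y y) ^+ 2 <= dot y y.
  apply: le_trans yj2_le; rewrite ler_sqr ?nnegrE ?mulr_ge0 ?(ltW alpha_gt0) //.
  exact: le_trans (mulr_ge0 (ltW alpha_gt0) yy_ge0) yj_ge.
have alpha2_yy : alpha ^+ 2 * dot y y <= 1 by nra.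
have a_yi_ge0 : 0 <= alpha * `|y i ord0| by rewrite mulr_ge0 ?(ltW alpha_gt0).
rewrite -(ler_pM2l alpha_gt0) mulfV ?gt_eqF // -(ler_sqr a_yi_ge0 ler01) ?nnegrE // expr1n.
by rewrite exprMn real_normK ?num_real //; nra.
Qed.

End CoerciveMatrix.

Section MeasurableInverse.
Variable R : realType.

Lemma measurable_inv : measurable_fun [set: R] (@GRing.inv R).
Proof.
rewrite -(setUv [set (0 : R)]); apply/measurable_funU => //; first exact: measurableC.
split.
  apply: (@eq_measurable_fun _ _ _ _ _ (cst (0 : R))); last exact: measurable_cst.
  by move=> x; rewrite inE /= => ->; rewrite invr0.
apply: subspace_continuous_measurable_fun; first exact: measurableC.
apply: continuous_in_subspaceT => x; rewrite inE /= => /eqP x_neq0.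
exact: inv_continuous.
Qed.

Lemma measurable_det (D : set R) n (A : R -> 'M[R]_n) :
  (forall i j, measurable_fun D (fun x => A x i j)) -> measurable_fun D (fun x => \det (A x)).
Proof.
move=> mA; apply: measurable_sum => s; apply: measurable_funM; first exact: measurable_cst.
by apply: measurable_prod => i _; exact: mA.
Qed.

Lemma measurable_adj (D : set R) n (A : R -> 'M[R]_n.+1) i j :
  (forall i j, measurable_fun D (fun x => A x i j)) -> measurable_fun D (fun x => \adj (A x) i j).
Proof.
move=> mA; under eq_fun do rewrite mxE /cofactor.
apply: measurable_funM; first exact: measurable_cst.
by apply: measurable_det => k l; under eq_fun do rewrite !mxE; exact: mA.
Qed.

Lemma coercive_invmx_bounded_measurable h (alpha : R) (C : R -> 'M[R]_3) :
  0 < alpha -> (forall x, (C x)^T = C x) ->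
  (forall x, 0 <= x <= h -> forall xi : vec R, alpha * dot xi xi <= dot (C x *m xi) xi) ->
  (forall i j, measurable_fun `[0, h] (fun x => C x i j)) ->
  forall i j, bounded_measurable h (fun x => invmx (C x) i j).
Proof.
move=> alpha_gt0 C_sym C_coercive mC i j; split; last first.
  exists alpha^-1 => x x0h.
  exact: coercive_invmx_bound alpha_gt0 (C_sym x) (C_coercive x x0h) i j.
apply: (@eq_measurable_fun _ _ _ _ _ (fun x => (\det (C x))^-1 * \adj (C x) i j)).
  move=> x; rewrite inE /= in_itv /= => x0h.
  by rewrite /invmx (coercive_unitmx alpha_gt0 (C_sym x) (C_coercive x x0h)) [RHS]mxE.
apply: measurable_funM; last exact: measurable_adj.
by apply: measurableT_comp; [exact: measurable_inv | exact: measurable_det].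
Qed.

End MeasurableInverse.

Section TriangleFubini.
Variable R : realType.
Local Notation mu := (@lebesgue_measure R).

Lemma in_itvE (x a b : R) : (x \in (`[a, b]%classic : set R)) = (a <= x <= b).
Proof. by apply/idP/idP; rewrite inE /= in_itv. Qed.

Lemma integrable_on_subitv h f (a b : R) : 0 <= a -> b <= h -> integrable_on h f ->
  mu.-integrable `[a, b] (EFin \o f).
Proof.
move=> a_ge0 bh f_int; apply: integrableS f_int => //; try exact: measurable_itv.
move=> x /=; rewrite !in_itv /= => /andP[ax xb].
by rewrite (le_trans a_ge0 ax) (le_trans xb bh).
Qed.

Lemma integral_EFin_Rintegral (D : set R) f :
  measurable D -> mu.-integrable D (EFin \o f) ->
  (\int[mu]_(x in D) (f x)%:E)%E = (\int[mu]_(x in D) f x)%:E.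
Proof. by move=> mD f_int; rewrite /Rintegral fineK //; exact: integrable_fin_num. Qed.

Lemma integrable_restrictT (D : set R) f : measurable D ->
  mu.-integrable D (EFin \o f) -> mu.-integrable setT (EFin \o (f \_ D)).
Proof.
by move=> mD f_int; rewrite -restrict_EFin; exact: (proj1 (@integrable_mkcond _ _ _ mu _ _ mD)).
Qed.

Variables (h : R) (f g : R -> R).
Hypotheses (f_int : integrable_on h f) (g_int : integrable_on h g).

Let mI : measurable (`[0, h]%classic : set R). Proof. exact: measurable_itv. Qed.
Let F := f \_ `[0, h].
Let G := g \_ `[0, h].
Let F_int : mu.-integrable setT (EFin \o F). Proof. exact: integrable_restrictT. Qed.
Let G_int : mu.-integrable setT (EFin \o G). Proof. exact: integrable_restrictT. Qed.
Let mF : measurable_fun setT F.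
Proof. by apply/(measurable_restrictT _ mI); exact: integrable_on_measurable. Qed.
Let mG : measurable_fun setT G.
Proof. by apply/(measurable_restrictT _ mI); exact: integrable_on_measurable. Qed.

Let kernel (z : R * R) := if z.2 <= z.1 then G z.1 * F z.2 else 0.

Let measurable_kernel : measurable_fun setT kernel.
Proof.
apply: measurable_fun_ifT.
- exact: measurable_fun_ler measurable_snd measurable_fst.
- by apply: measurable_funM; apply: measurableT_comp.
- exact: measurable_cst.
Qed.

Let kernel_integrable : (mu \x mu)%E.-integrable setT (EFin \o kernel).
Proof.
apply/integrableP; split; first exact/measurable_EFinP.
pose b z := (`|G z.1| * `|F z.2|)%:E.
have mb : measurable_fun setT b.
  by apply/measurable_EFinP; apply: measurable_funM; apply: measurableT_comp => //;
    apply: measurableT_comp.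
apply: (@le_lt_trans _ _ (\int[(mu \x mu)%E]_z b z)%E).
  apply: ge0_le_integral => //.
    by apply: measurableT_comp => //; exact/measurable_EFinP.
  move=> z _; rewrite /b /kernel /comp /=.
  by case: ifP => _; rewrite lee_fin ?normrM // normr0; apply: mulr_ge0.
rewrite fubini_tonelli1 //; last by move=> z; rewrite lee_fin mulr_ge0.
rewrite /fubini_F /=.
have /integrableP[_ Ffin] := F_int; have /integrableP[_ Gfin] := G_int.
set IF := (\int[mu]_y _)%E in Ffin.
have inner x : (\int[mu]_y b (x, y) = `|G x|%:E * IF)%E.
  rewrite /b /=; under eq_integral do rewrite EFinM.
  by rewrite ge0_integralZl //; apply/measurable_EFinP; apply: measurableT_comp.
under eq_integral do rewrite inner.
rewrite ge0_integralZr //.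
- rewrite lte_mul_pinfty //; first by apply: integral_ge0 => x _; rewrite lee_fin.
  by rewrite ge0_fin_numE //; apply: integral_ge0.
- by apply/measurable_EFinP; apply: measurableT_comp.
- by apply: integral_ge0.
Qed.

Let integral_kernel_fst :
  (\int[mu]_(x in `[0%R, h]) ((g x * \int[mu]_(t in `[0%R, x]) f t)%:E)
   = \int[mu]_x \int[mu]_t (EFin \o kernel) (x, t))%E.
Proof.
rewrite integral_mkcond; apply: eq_integral => x _; rewrite patchE.
case: ifPn => [|xI]; last first.
  under eq_integral do rewrite /kernel /G /comp /= patchE (negbTE xI) mul0r if_same.
  by rewrite integral0.
rewrite in_itvE => /andP[x0 xh].
have f_int0x := integrable_on_subitv (lexx 0) xh f_int.
under eq_integral => t _.
  rewrite (_ : (EFin \o kernel) (x, t) = ((g x)%:E * (EFin \o (f \_ `[0%R, x])) t)%E).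
    over.
  rewrite /kernel /G /F /comp /= !patchE !in_itvE x0 xh /=.
  by case: (boolP (t <= x)) => tx; case: (boolP (0 <= t)) => t0 /=;
    rewrite ?(le_trans tx xh) ?mulr0 ?mule0.
rewrite integralZl //; last exact: integrable_restrictT f_int0x.
by rewrite -restrict_EFin -integral_mkcond integral_EFin_Rintegral // EFinM.
Qed.

Let integral_kernel_snd :
  (\int[mu]_(t in `[0%R, h]) ((f t * \int[mu]_(x in `[t, h]) g x)%:E)
   = \int[mu]_t \int[mu]_x (EFin \o kernel) (x, t))%E.
Proof.
rewrite integral_mkcond; apply: eq_integral => t _; rewrite patchE.
case: ifPn => [|tI]; last first.
  under eq_integral do rewrite /kernel /F /comp /= patchE (negbTE tI) mulr0 if_same.
  by rewrite integral0.
rewrite in_itvE => /andP[t0 th].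
have g_intth := integrable_on_subitv t0 (lexx h) g_int.
under eq_integral => x _.
  rewrite (_ : (EFin \o kernel) (x, t) = ((f t)%:E * (EFin \o (g \_ `[t, h])) x)%E).
    over.
  rewrite /kernel /G /F /comp /= !patchE !in_itvE t0 th /=.
  case: (boolP (t <= x)) => tx /=; rewrite ?mulr0 ?mule0 //.
  by rewrite (le_trans t0 tx) /= mulrC.
rewrite integralZl //; last exact: integrable_restrictT g_intth.
by rewrite -restrict_EFin -integral_mkcond integral_EFin_Rintegral // EFinM.
Qed.

Lemma Rintegral_mul_primitive :
  \int[mu]_(x in `[0, h]) (g x * \int[mu]_(t in `[0, x]) f t)
  = \int[mu]_(t in `[0, h]) (f t * \int[mu]_(x in `[t, h]) g x).
Proof.
by rewrite /Rintegral integral_kernel_fst integral_kernel_snd (Fubini kernel_integrable).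
Qed.

End TriangleFubini.

Section IntegrationByParts.
Variable R : realType.
Local Notation mu := (@lebesgue_measure R).
Implicit Types h : R.

Lemma Rintegral_mul_deriv_poly h (f df : R -> R) (q : {poly R}) :
  0 <= h -> integrable_on h f -> integrable_on h df ->
  (forall x, 0 <= x <= h -> f x = f 0 + \int[mu]_(t in `[0, x]) df t) ->
  \int[mu]_(x in `[0, h]) (f x * (q^`()).[x])
  = f h * q.[h] - f 0 * q.[0] - \int[mu]_(x in `[0, h]) (df x * q.[x]).
Proof.
move=> h_ge0 f_int df_int f_abs.
have mI : measurable (`[0, h]%classic : set R) by exact: measurable_itv.
pose F x := \int[mu]_(t in `[0, x]) df t.
have dq_int : integrable_on h (horner q^`()).
  exact/bounded_measurable_integrable/horner_bounded_measurable.
have dqF_int : integrable_on h (fun x => (q^`()).[x] * F x).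
  have : integrable_on h (fun x => f x * (q^`()).[x] - f 0 * (q^`()).[x]).
    apply: integrable_onB; last exact: integrable_onZ.
    exact/integrable_onMr/horner_bounded_measurable.
  apply: eq_integrable => // x; rewrite in_itvE => x0h /=.
  by rewrite f_abs // /F; congr EFin; ring.
have dfq_int : integrable_on h (fun x => df x * q.[x]).
  exact/integrable_onMr/horner_bounded_measurable.
have -> : \int[mu]_(x in `[0, h]) (f x * (q^`()).[x])
        = \int[mu]_(x in `[0, h]) (f 0 * (q^`()).[x] + (q^`()).[x] * F x).
  by apply: eq_Rintegral => x; rewrite in_itvE => x0h; rewrite f_abs // /F; ring.
rewrite (@RintegralD _ _ _ mu _ _ _ mI (integrable_onZ (f 0) dq_int) dqF_int).
rewrite (@RintegralZl _ _ _ mu _ _ _ mI dq_int).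
rewrite Rintegral_deriv_poly //.
rewrite /F Rintegral_mul_primitive //.
have -> : \int[mu]_(t in `[0, h]) (df t * \int[mu]_(x in `[t, h]) (q^`()).[x])
        = \int[mu]_(t in `[0, h]) (q.[h] * df t - df t * q.[t]).
  apply: eq_Rintegral => t; rewrite in_itvE => /andP[_ th].
  by rewrite Rintegral_deriv_poly //; ring.
rewrite (@RintegralB _ _ _ mu _ _ _ mI (integrable_onZ q.[h] df_int) dfq_int).
rewrite (@RintegralZl _ _ _ mu _ _ _ mI df_int).
by rewrite (f_abs h) ?lexx ?h_ge0 //; ring.
Qed.

Lemma H1_integration_by_parts h (f df : R -> vec R) (V : vpoly R) : 0 <= h -> H1 h f df ->
  ip h f (veval (vderiv V))
  = bpair (fun s => nu s *: f (xpt h s)) (fun s => veval V (xpt h s)) - ip h df (veval V).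
Proof.
move=> h_ge0 [f_L2 [df_L2 f_abs]].
have f_int := L2_vintegrable f_L2; have df_int := L2_vintegrable df_L2.
rewrite !ip_componentwise => [| i | i]; last 2 first.
- by apply: integrable_onMr => //; exact: veval_vbounded.
- by apply: integrable_onMr => //; exact: veval_vbounded.
rewrite /bpair /dot /= -big_split -sumrB /=; apply: eq_bigr => i _.
under eq_Rintegral do rewrite !mxE.
under [X in _ = _ - X]eq_Rintegral do rewrite mxE.
rewrite (Rintegral_mul_deriv_poly (f := fun x => f x i ord0) (df := fun x => df x i ord0)) //.
  by rewrite !mxE; ring.
by move=> x /f_abs/(congr1 (fun M : vec R => M i ord0)); rewrite !mxE.
Qed.

End IntegrationByParts.

Section BoundaryPairing.
Variable R : realType.
Implicit Types A B C : bool -> vec R.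

Lemma bpairBl A B C : bpair (fun s => A s - B s) C = bpair A C - bpair B C.
Proof. by rewrite /bpair !dotBl; ring. Qed.

Lemma bpair_flux_mismatch (tau : R) A B X Y C :
  bpair (fun s => tau *: (A s - B s) - nu s *: (X s - Y s)) C
  = tau * bpair A C - tau * bpair B C
    - bpair (fun s => nu s *: X s) C + bpair (fun s => nu s *: Y s) C.
Proof. by rewrite /bpair /dot !big_ord_recr !big_ord0 /= !mxE; ring. Qed.

Lemma jumpB (N E : finType) (src tgt : E -> N) a (F G : E -> bool -> vec R) :
  jump src tgt a (fun e s => F e s - G e s) = jump src tgt a F - jump src tgt a G.
Proof. by rewrite /jump !sumrB opprD addrACA. Qed.

End BoundaryPairing.

Section EdgeErrorEquations.
Variables (R : realType) (p : nat) (h tau : R).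
Hypothesis h_ge0 : 0 <= h.
Implicit Types (u r n m dn : R -> vec R) (un ubn : bool -> vec R).

Local Notation at_ends F := (fun s : bool => F (xpt h s)).

Lemma ip_vderiv_proj u n dn (P1 P2 V : vpoly R) :
  is_proj p tau h u n P1 P2 -> H1 h n dn -> polyle p.+1 V ->
  ip h (veval (vderiv P2)) (veval V)
  = bpair (fun s => nu s *: veval P2 (xpt h s)) (at_ends (veval V))
    - bpair (fun s => nu s *: n (xpt h s)) (at_ends (veval V)) + ip h dn (veval V).
Proof.
move=> [_ [_ [orth _]]] n_H1 sV.
have := H1_integration_by_parts V h_ge0 (veval_H1 h P2).
rewrite (orth _ (polyle_vderiv sV)).2 (H1_integration_by_parts V h_ge0 n_H1).
by move=> ibp_P2; lra.
Qed.

Variables (A : R -> 'M[R]_3) (d : vec R).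
Hypothesis A_bounded : forall i j, bounded_measurable h (fun x => A x i j).

Lemma displacement_error_eq u n r un ubn (P1 P2 ub nb rb P : vpoly R) :
  is_proj p tau h u n P1 P2 -> vintegrable h n -> vintegrable h r -> polyle p.+1 P ->
  - ip h (fun x => A x *m n x) (veval P) + ip h u (veval (vderiv P))
    - ip h (fun x => cross d (r x)) (veval P)
    = bpair un (fun s => nu s *: veval P (xpt h s)) ->
  - ip h (fun x => A x *m veval nb x) (veval P) + ip h (veval ub) (veval (vderiv P))
    - ip h (fun x => cross d (veval rb x)) (veval P)
    = bpair ubn (fun s => nu s *: veval P (xpt h s)) ->
  ip h (veval (P1 - ub)) (veval (vderiv P))
  = ip h (fun x => A x *m (n x - veval nb x)) (veval P)
    + ip h (fun x => cross d (r x - veval rb x)) (veval P)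
    + bpair (fun s => un s - ubn s) (fun s => nu s *: veval P (xpt h s)).
Proof.
move=> [_ [_ [orth _]]] n_int r_int sP exact_eq hdg_eq.
have P_bnd := veval_vbounded h P.
have poly_int (Q : vpoly R) := veval_vintegrable h Q.
rewrite vevalB (ipBl (poly_int _) (poly_int _) (veval_vbounded h _)).
rewrite (orth _ (polyle_vderiv sP)).1.
have -> : (fun x => A x *m (n x - veval nb x)) = (fun x => A x *m n x - A x *m veval nb x).
  by apply/funext => x; rewrite mulmxBr.
have -> : (fun x => cross d (r x - veval rb x)) = (fun x => cross d (r x) - cross d (veval rb x)).
  by apply/funext => x; rewrite crossBr.
rewrite (ipBl (vintegrable_mulmx A_bounded n_int) (vintegrable_mulmx A_bounded (poly_int nb))
  P_bnd).
rewrite (ipBl (vintegrable_cross d r_int) (vintegrable_cross d (poly_int rb)) P_bnd) bpairBl.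
lra.
Qed.

Lemma rotation_error_eq r m rn rbn (Q1 Q2 rb mb Q : vpoly R) :
  is_proj p tau h r m Q1 Q2 -> vintegrable h m -> polyle p.+1 Q ->
  - ip h (fun x => A x *m m x) (veval Q) + ip h r (veval (vderiv Q))
    = bpair rn (fun s => nu s *: veval Q (xpt h s)) ->
  - ip h (fun x => A x *m veval mb x) (veval Q) + ip h (veval rb) (veval (vderiv Q))
    = bpair rbn (fun s => nu s *: veval Q (xpt h s)) ->
  ip h (veval (Q1 - rb)) (veval (vderiv Q))
  = ip h (fun x => A x *m (m x - veval mb x)) (veval Q)
    + bpair (fun s => rn s - rbn s) (fun s => nu s *: veval Q (xpt h s)).
Proof.
move=> [_ [_ [orth _]]] m_int sQ exact_eq hdg_eq.
have poly_int (P : vpoly R) := veval_vintegrable h P.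
rewrite vevalB (ipBl (poly_int _) (poly_int _) (veval_vbounded h _)).
rewrite (orth _ (polyle_vderiv sQ)).1.
have -> : (fun x => A x *m (m x - veval mb x)) = (fun x => A x *m m x - A x *m veval mb x).
  by apply/funext => x; rewrite mulmxBr.
rewrite (ipBl (vintegrable_mulmx A_bounded m_int) (vintegrable_mulmx A_bounded (poly_int mb))
  (veval_vbounded h Q)) bpairBl.
lra.
Qed.

Lemma force_error_eq u n dn fe ubn (P1 P2 ub nb V : vpoly R) :
  is_proj p tau h u n P1 P2 -> H1 h n dn -> polyle p.+1 V ->
  ip h dn (veval V) = ip h fe (veval V) ->
  ip h (veval (vderiv nb)) (veval V) + tau * bpair (at_ends (veval ub)) (at_ends (veval V))
    = ip h fe (veval V) + tau * bpair ubn (at_ends (veval V)) ->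
  ip h (veval (vderiv (P2 - nb))) (veval V)
  = bpair (fun s => tau *: (veval ub (xpt h s) - ubn s)
                    - nu s *: (n (xpt h s) - veval P2 (xpt h s))) (at_ends (veval V)).
Proof.
move=> proj n_H1 sV exact_eq hdg_eq.
have poly_int (P : vpoly R) := veval_vintegrable h P.
rewrite vderivB vevalB (ipBl (poly_int _) (poly_int _) (veval_vbounded h _)).
rewrite (ip_vderiv_proj proj n_H1 sV) bpair_flux_mismatch.
lra.
Qed.

Lemma moment_error_eq n r m dm ge rbn (Q1 Q2 nb rb mb W : vpoly R) :
  is_proj p tau h r m Q1 Q2 -> H1 h m dm -> vintegrable h n -> polyle p.+1 W ->
  ip h (fun x => cross d (n x)) (veval W) + ip h dm (veval W) = ip h ge (veval W) ->
  ip h (fun x => cross d (veval nb x)) (veval W) + ip h (veval (vderiv mb)) (veval W)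
    + tau * bpair (at_ends (veval rb)) (at_ends (veval W))
    = ip h ge (veval W) + tau * bpair rbn (at_ends (veval W)) ->
  ip h (veval (vderiv (Q2 - mb))) (veval W)
  = bpair (fun s => tau *: (veval rb (xpt h s) - rbn s)
                    - nu s *: (m (xpt h s) - veval Q2 (xpt h s))) (at_ends (veval W))
    - ip h (fun x => cross d (n x - veval nb x)) (veval W).
Proof.
move=> proj m_H1 n_int sW exact_eq hdg_eq.
have poly_int (P : vpoly R) := veval_vintegrable h P.
rewrite vderivB vevalB (ipBl (poly_int _) (poly_int _) (veval_vbounded h _)).
rewrite (ip_vderiv_proj proj m_H1 sW) bpair_flux_mismatch.
have -> : (fun x => cross d (n x - veval nb x)) = (fun x => cross d (n x) - cross d (veval nb x)).
  by apply/funext => x; rewrite crossBr.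
rewrite (ipBl (vintegrable_cross d n_int) (vintegrable_cross d (poly_int nb)) (veval_vbounded h W)).
lra.
Qed.

End EdgeErrorEquations.

Section NodeErrorEquation.
Variables (R : realType) (p : nat) (N E : finType) (src tgt : E -> N) (h tau : E -> R).

Lemma jump_proj_trace_error (u n : E -> R -> vec R) (P1 P2 : E -> vpoly R) :
  (forall e, is_proj p (tau e) (h e) (u e) (n e) (P1 e) (P2 e)) ->
  forall (ubn : N -> vec R) (ub nb : E -> vpoly R) a,
  jump src tgt a (fun e s => nu s *: veval (P2 e - nb e) (xpt (h e) s)
      + tau e *: veval (P1 e - ub e) (xpt (h e) s)
      - tau e *: (u e (xpt (h e) s) - ubn (endnode src tgt e s)))
  = jump src tgt a (fun e s => nu s *: n e (xpt (h e) s))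
    - jump src tgt a (fun e s => nu s *: veval (nb e) (xpt (h e) s)
      + tau e *: (veval (ub e) (xpt (h e) s) - ubn (endnode src tgt e s))).
Proof.
move=> proj ubn ub nb a; rewrite -jumpB; congr jump; apply/funext => e; apply/funext => s.
have [_ [_ [_ trace]]] := proj e; apply/matrixP => i j.
have := congr1 (fun M : vec R => M i j) (trace s); rewrite !vevalB !mxE.
lra.
Qed.

End NodeErrorEquation.

Arguments jump_proj_trace_error {R p N E src tgt h tau u n P1 P2}.

Theorem lemma4p2
  (R : realType)
  (* network: nodes numbered 0..K-1, edge e joins src e = n_k to tgt e = n_l, k < l *)
  (K : nat) (E : finType) (src tgt : E -> 'I_K) (pos : 'I_K -> vec R)
  (Horient : forall e, (src e < tgt e)%N)
  (Hembed : injective pos)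
  (Hconn : graph_connected src tgt)
  (ND : {set 'I_K}) (HND : exists a, a \in ND)
  (* material tensors *)
  (Cn Cm : E -> R -> 'M[R]_3) (alpha beta : R) (Halpha : 0 < alpha) (Hbeta : 0 < beta)
  (HCsym : forall e x, (Cn e x)^T = Cn e x /\ (Cm e x)^T = Cm e x)
  (HCmeas : forall e (i j : 'I_3),
      measurable_fun `[0, elen src tgt pos e] (fun x => Cn e x i j) /\
      measurable_fun `[0, elen src tgt pos e] (fun x => Cm e x i j))
  (HCbnd : forall e x (xi : vec R), 0 <= x <= elen src tgt pos e ->
      alpha * dot xi xi <= dot (Cn e x *m xi) xi <= beta * dot xi xi /\
      alpha * dot xi xi <= dot (Cm e x *m xi) xi <= beta * dot xi xi)
  (* data *)
  (fe ge : E -> R -> vec R)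
  (Hfe : forall e, L2 (elen src tgt pos e) (fe e) /\ L2 (elen src tgt pos e) (ge e))
  (fn gn uD rD : 'I_K -> vec R)
  (* exact solution; dn, dm are the weak derivatives of n, m *)
  (u r n m dn dm : E -> R -> vec R) (un rn : 'I_K -> vec R)
  (Hureg : forall e, L2 (elen src tgt pos e) (u e) /\ L2 (elen src tgt pos e) (r e))
  (Hnreg : forall e, H1 (elen src tgt pos e) (n e) (dn e) /\ H1 (elen src tgt pos e) (m e) (dm e))
  (HexD : forall a, a \in ND -> un a = uD a /\ rn a = rD a)
  (HexJ : forall a, a \notin ND ->
      jump src tgt a (fun e s => nu s *: n e (xpt (elen src tgt pos e) s)) = fn a /\
      jump src tgt a (fun e s => nu s *: m e (xpt (elen src tgt pos e) s)) = gn a)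
  (Hex1 : forall e pp dpp, H1 (elen src tgt pos e) pp dpp ->
      - ip (elen src tgt pos e) (fun x => invmx (Cn e x) *m n e x) pp
      + ip (elen src tgt pos e) (u e) dpp
      - ip (elen src tgt pos e) (fun x => cross (edir src tgt pos e) (r e x)) pp
      = bpair (fun s => un (endnode src tgt e s))
              (fun s => nu s *: pp (xpt (elen src tgt pos e) s)))
  (Hex2 : forall e qq dqq, H1 (elen src tgt pos e) qq dqq ->
      - ip (elen src tgt pos e) (fun x => invmx (Cm e x) *m m e x) qq
      + ip (elen src tgt pos e) (r e) dqq
      = bpair (fun s => rn (endnode src tgt e s))
              (fun s => nu s *: qq (xpt (elen src tgt pos e) s)))
  (Hex3 : forall e v, L2 (elen src tgt pos e) v ->
      ip (elen src tgt pos e) (dn e) v = ip (elen src tgt pos e) (fe e) v)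
  (Hex4 : forall e w, L2 (elen src tgt pos e) w ->
      ip (elen src tgt pos e) (fun x => cross (edir src tgt pos e) (n e x)) w
      + ip (elen src tgt pos e) (dm e) w = ip (elen src tgt pos e) (ge e) w)
  (* consequence of the exact system recorded in the context: u, r in H^1 with traces u_n, r_n *)
  (Hutrace : forall e,
      (exists du, H1 (elen src tgt pos e) (u e) du) /\
      (exists dr, H1 (elen src tgt pos e) (r e) dr) /\
      (forall s, u e (xpt (elen src tgt pos e) s) = un (endnode src tgt e s) /\
                 r e (xpt (elen src tgt pos e) s) = rn (endnode src tgt e s)))
  (* HDG solution *)
  (p : nat) (tau : E -> R) (Htau : forall e, 0 < tau e)
  (ub rb nb mb : E -> vpoly R) (ubn rbn : 'I_K -> vec R)
  (Hdeg : forall e, [/\ polyle p.+1 (ub e), polyle p.+1 (rb e),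
                        polyle p.+1 (nb e) & polyle p.+1 (mb e)])
  (HhD : forall a, a \in ND -> ubn a = uD a /\ rbn a = rD a)
  (HhJ : forall a, a \notin ND ->
      jump src tgt a (fun e s => nu s *: veval (nb e) (xpt (elen src tgt pos e) s)
            + tau e *: (veval (ub e) (xpt (elen src tgt pos e) s) - ubn (endnode src tgt e s)))
        = fn a /\
      jump src tgt a (fun e s => nu s *: veval (mb e) (xpt (elen src tgt pos e) s)
            + tau e *: (veval (rb e) (xpt (elen src tgt pos e) s) - rbn (endnode src tgt e s)))
        = gn a)
  (Hh1 : forall e P, polyle p.+1 P ->
      - ip (elen src tgt pos e) (fun x => invmx (Cn e x) *m veval (nb e) x) (veval P)
      + ip (elen src tgt pos e) (veval (ub e)) (veval (vderiv P))
      - ip (elen src tgt pos e) (fun x => cross (edir src tgt pos e) (veval (rb e) x)) (veval P)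
      = bpair (fun s => ubn (endnode src tgt e s))
              (fun s => nu s *: veval P (xpt (elen src tgt pos e) s)))
  (Hh2 : forall e Q, polyle p.+1 Q ->
      - ip (elen src tgt pos e) (fun x => invmx (Cm e x) *m veval (mb e) x) (veval Q)
      + ip (elen src tgt pos e) (veval (rb e)) (veval (vderiv Q))
      = bpair (fun s => rbn (endnode src tgt e s))
              (fun s => nu s *: veval Q (xpt (elen src tgt pos e) s)))
  (Hh3 : forall e V, polyle p.+1 V ->
      ip (elen src tgt pos e) (veval (vderiv (nb e))) (veval V)
      + tau e * bpair (fun s => veval (ub e) (xpt (elen src tgt pos e) s))
                      (fun s => veval V (xpt (elen src tgt pos e) s))
      = ip (elen src tgt pos e) (fe e) (veval V)
      + tau e * bpair (fun s => ubn (endnode src tgt e s))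
                      (fun s => veval V (xpt (elen src tgt pos e) s)))
  (Hh4 : forall e W, polyle p.+1 W ->
      ip (elen src tgt pos e) (fun x => cross (edir src tgt pos e) (veval (nb e) x)) (veval W)
      + ip (elen src tgt pos e) (veval (vderiv (mb e))) (veval W)
      + tau e * bpair (fun s => veval (rb e) (xpt (elen src tgt pos e) s))
                      (fun s => veval W (xpt (elen src tgt pos e) s))
      = ip (elen src tgt pos e) (ge e) (veval W)
      + tau e * bpair (fun s => rbn (endnode src tgt e s))
                      (fun s => veval W (xpt (elen src tgt pos e) s)))
  (* the projections Pi(u_e, n_e) = (Pu1 e, Pu2 e) and Pi(r_e, m_e) = (Pr1 e, Pr2 e) *)
  (Pu1 Pu2 Pr1 Pr2 : E -> vpoly R)
  (Hproj : forall e,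
      is_proj p (tau e) (elen src tgt pos e) (u e) (n e) (Pu1 e) (Pu2 e) /\
      is_proj p (tau e) (elen src tgt pos e) (r e) (m e) (Pr1 e) (Pr2 e)) :
  let h := elen src tgt pos in
  let idir := edir src tgt pos in
  let epsu e := veval (Pu1 e - ub e) in
  let epsn e := veval (Pu2 e - nb e) in
  let epsr e := veval (Pr1 e - rb e) in
  let epsm e := veval (Pr2 e - mb e) in
  let thetan e x := n e x - veval (Pu2 e) x in
  let thetam e x := m e x - veval (Pr2 e) x in
  (forall e P Q V W, polyle p.+1 P -> polyle p.+1 Q -> polyle p.+1 V -> polyle p.+1 W ->
    [/\ ip (h e) (epsu e) (veval (vderiv P))
        = ip (h e) (fun x => invmx (Cn e x) *m (n e x - veval (nb e) x)) (veval P)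
        + ip (h e) (fun x => cross (idir e) (r e x - veval (rb e) x)) (veval P)
        + bpair (fun s => u e (xpt (h e) s) - ubn (endnode src tgt e s))
                (fun s => nu s *: veval P (xpt (h e) s)),
        ip (h e) (epsr e) (veval (vderiv Q))
        = ip (h e) (fun x => invmx (Cm e x) *m (m e x - veval (mb e) x)) (veval Q)
        + bpair (fun s => r e (xpt (h e) s) - rbn (endnode src tgt e s))
                (fun s => nu s *: veval Q (xpt (h e) s)),
        ip (h e) (veval (vderiv (Pu2 e - nb e))) (veval V)
        = bpair (fun s => tau e *: (veval (ub e) (xpt (h e) s) - ubn (endnode src tgt e s))
                          - nu s *: thetan e (xpt (h e) s))
                (fun s => veval V (xpt (h e) s)) &
        ip (h e) (veval (vderiv (Pr2 e - mb e))) (veval W)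
        = bpair (fun s => tau e *: (veval (rb e) (xpt (h e) s) - rbn (endnode src tgt e s))
                          - nu s *: thetam e (xpt (h e) s))
                (fun s => veval W (xpt (h e) s))
        - ip (h e) (fun x => cross (idir e) (n e x - veval (nb e) x)) (veval W)]) /\
  (forall a, a \notin ND -> forall va wa : vec R,
    0 = dot (jump src tgt a (fun e s =>
              nu s *: epsn e (xpt (h e) s) + tau e *: epsu e (xpt (h e) s)
              - tau e *: (u e (xpt (h e) s) - ubn (endnode src tgt e s)))) va
      + dot (jump src tgt a (fun e s =>
              nu s *: epsm e (xpt (h e) s) + tau e *: epsr e (xpt (h e) s)
              - tau e *: (r e (xpt (h e) s) - rbn (endnode src tgt e s)))) wa).
Proof.
cbv zeta beta; set h := elen src tgt pos.
split=> [e P Q V W sP sQ sV sW | a aND va wa]; last first.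
  have [n_jump m_jump] := HexJ a aND; have [nb_jump mb_jump] := HhJ a aND.
  rewrite (jump_proj_trace_error (fun e => (Hproj e).1)).
  rewrite (jump_proj_trace_error (fun e => (Hproj e).2)).
  by rewrite n_jump m_jump nb_jump mb_jump !subrr !dot0l addr0.
have h_ge0 : 0 <= h e by rewrite /h /elen /vnorm sqrtr_ge0.
have Cn_bnd := coercive_invmx_bounded_measurable Halpha (fun x => (HCsym e x).1)
  (fun x x0h xi => (andP (HCbnd e x xi x0h).1).1) (fun i j => (HCmeas e i j).1).
have Cm_bnd := coercive_invmx_bounded_measurable Halpha (fun x => (HCsym e x).2)
  (fun x x0h xi => (andP (HCbnd e x xi x0h).2).1) (fun i j => (HCmeas e i j).2).
have [proj_u proj_r] := Hproj e; have [n_H1 m_H1] := Hnreg e.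
have n_int := L2_vintegrable n_H1.1; have m_int := L2_vintegrable m_H1.1.
have r_int := L2_vintegrable (Hureg e).2; have [_ [_ trace]] := Hutrace e.
split.
- apply: (displacement_error_eq Cn_bnd proj_u n_int r_int sP _ (Hh1 e P sP)).
  have -> : (fun s => u e (xpt (h e) s)) = (fun s => un (endnode src tgt e s)).
    by apply/funext => s; rewrite (trace s).1.
  exact: Hex1 e _ _ (veval_H1 _ P).
- apply: (rotation_error_eq Cm_bnd proj_r m_int sQ _ (Hh2 e Q sQ)).
  have -> : (fun s => r e (xpt (h e) s)) = (fun s => rn (endnode src tgt e s)).
    by apply/funext => s; rewrite (trace s).2.
  exact: Hex2 e _ _ (veval_H1 _ Q).
- exact (force_error_eq h_ge0 proj_u n_H1 sV (Hex3 e _ (veval_L2 _ V)) (Hh3 e V sV)).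
- exact (moment_error_eq h_ge0 proj_r m_H1 n_int sW (Hex4 e _ (veval_L2 _ W)) (Hh4 e W sW)).
Qed.
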